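(* For any non-negative integers $b$ and $c$, \[\binom{2b}{b}=\frac{1}{4^c}C(b,c)+\sum_{j=1}^c\frac{1}{4^j}C(b+1,j-1),\qquad 2\,C(b)=\frac{1}{4^c}C(b,c+1)+\sum_{j=1}^c\frac{1}{4^j}C(b+1,j).\]
   Context: $C(p,q)=\frac{(2p)!(2q)!}{p!(p+q)!q!}$ for non-negative integers $p,q$, and $C(b)=\frac{1}{b+1}\binom{2b}{b}$ is the $b$-th Catalan number. *)

From mathcomp Require Import all_boot all_order all_algebra.
Set Implicit Arguments. Unset Strict Implicit. Unset Printing Implicit Defensive.
Import Order.TTheory GRing.Theory Num.Theory.
Local Open Scope ring_scope.

Definition superCat (p q : nat) : rat :=
  ((2 * p)`!)%:R * ((2 * q)`!)%:R / ((p`!)%:R * ((p + q)`!)%:R * (q`!)%:R).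

Definition catalan (b : nat) : rat := ('C(2 * b, b))%:R / (b.+1)%:R.

(* The super Catalan numbers satisfy 4 C(p,q) = C(p+1,q) + C(p,q+1).  Dividing by
   4^(k+1) and iterating in the second index unfolds C(b,q) into
   C(b,q+c)/4^c plus a weighted sum of C(b+1,.); the two identities are the
   cases q = 0 and q = 1, since C(b,0) = binom(2b,b) and C(b,1) = 2 C(b). *)
From mathcomp Require Import all_boot all_order all_algebra.
From mathcomp Require Import ring.
Import Order.TTheory GRing.Theory Num.Theory.
Local Open Scope ring_scope.

Lemma natr_fact_neq0 n : (n`!)%:R != 0 :> rat.
Proof. by rewrite pnatr_eq0 -lt0n fact_gt0. Qed.

Lemma natr_succ_neq0 n : (n.+1)%:R != 0 :> rat.
Proof. by rewrite pnatr_eq0. Qed.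

Lemma superCat_recurrence p q :
  superCat p.+1 q + superCat p q.+1 = 4 * superCat p q.
Proof.
rewrite /superCat !mulnS addSn addnS !factS !natrM !mulrSr !natrD.
by field; rewrite -natrD !natr1 !natr_fact_neq0 !natr_succ_neq0.
Qed.

Lemma superCat_shift p q k :
  superCat p q / 4 ^+ k = superCat p q.+1 / 4 ^+ k.+1 + superCat p.+1 q / 4 ^+ k.+1.
Proof.
have four_k_neq0 : (4 : rat) ^+ k != 0 by rewrite expf_neq0.
rewrite -[superCat p q](mulKf (_ : 4 != 0)) // -superCat_recurrence exprS.
by field; rewrite four_k_neq0.
Qed.

Lemma superCat_expand p q c :
  superCat p q =
    superCat p (q + c) / 4 ^+ c + \sum_(1 <= j < c.+1) superCat p.+1 (q + j.-1) / 4 ^+ j.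
Proof.
elim: c => [|c IH]; first by rewrite big_geq // addn0 expr0 divr1 addr0.
by rewrite IH [in RHS]big_nat_recr //= superCat_shift addnS; ring.
Qed.

Lemma superCatn0 b : superCat b 0 = ('C(2 * b, b))%:R.
Proof.
rewrite /superCat addn0 muln0 fact0 !mulr1 mul2n -addnn.
rewrite -(bin_fact (leq_addr b b)) addKn !natrM.
by rewrite mulfK // mulf_neq0 // natr_fact_neq0.
Qed.

Lemma superCatn1 b : superCat b 1 = 2 * catalan b.
Proof.
rewrite /catalan -superCatn0 /superCat addn1 addn0 muln1 muln0 !factS fact0 !natrM.
by field; rewrite addrC natr1 natr_succ_neq0 natr_fact_neq0.
Qed.

Theorem corollary8p9 (b c : nat) :
  ('C(2 * b, b))%:R =
    superCat b c / (4 ^+ c) + \sum_(1 <= j < c.+1) superCat b.+1 j.-1 / (4 ^+ j)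
  /\
  2 * catalan b =
    superCat b c.+1 / (4 ^+ c) + \sum_(1 <= j < c.+1) superCat b.+1 j / (4 ^+ j).
Proof.
split; first by rewrite -superCatn0 (superCat_expand b 0 c).
rewrite -superCatn1 (superCat_expand b 1 c) add1n.
congr (_ + _); apply: eq_big_nat => j /andP[j_gt0 _].
by rewrite add1n prednK.
Qed.
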